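(* Let $(G,P)$ be a quasi-lattice ordered group. The following are equivalent: (1) $(G,P)$ has a FESSPE; (2) $c_0(P)\subseteq B_P$; (3) $c_0(P)$ is an essential ideal in $B_P$; (4) $c_0(\iota(P))$ is an essential ideal in $\mathcal D$.
   Context: Quasi-lattice ordered group $(G,P)$: $G$ discrete, $P\subseteq G$ subsemigroup with $P\cap P^{-1}=\{e\}$, and for $x\le y\iff x^{-1}y\in P$ elements with a common upper bound in $P$ have a least one in $P$. A FESSPE is a finite $F\subseteq P\setminus\{e\}$ with $FP=P\setminus\{e\}$. For $s\in P$, $1_s\in\ell^\infty(P)$ is the characteristic function of $\{t\in P:s\le t\}$, and $B_P=\overline{\mathrm{span}}\{1_s:s\in P\}\subseteq\ell^\infty(P)$. On $\ell^2(P)$ with basis $\{\varepsilon_t\}$, $T_s\varepsilon_t=\varepsilon_{st}$ and $\mathcal D=\overline{\mathrm{span}}\{T_sT_s^*:s\in P\}$; note $T_sT_s^*$ is the multiplication operator $M_{1_s}$, so $\mathcal D=\{M_f:f\in B_P\}$. The spectrum of $\mathcal D$ is identified with Nica's space $\Omega$ of nonempty hereditary directed subsets of $P$, and $\iota:P\to\Omega$, $\iota(t)=\{s\in P:s\le t\}$; $c_0(\iota(P))$ denotes the set of multiplication operators $\{M_f:f\in c_0(P)\}$ on $\ell^2(P)$ (the functions on $\Omega$ supported on $\iota(P)$ vanishing at infinity there). *)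

From mathcomp Require Import all_boot all_algebra complex.
From mathcomp Require Import boolp classical_sets reals Rstruct.

Set Implicit Arguments.
Unset Strict Implicit.
Unset Printing Implicit Defensive.

Import GRing.Theory Num.Theory.
Local Open Scope ring_scope.
Local Open Scope complex_scope.
Local Open Scope classical_set_scope.

Definition CC : Type := (Rdefinitions.R)[i].

Record is_group (G : Type) (mul : G -> G -> G) (e : G) (inv : G -> G) : Prop := {
  grp_mulA : forall x y z, mul x (mul y z) = mul (mul x y) z;
  grp_mul1g : forall x, mul e x = x;
  grp_mulg1 : forall x, mul x e = x;
  grp_mulVg : forall x, mul (inv x) x = e;
  grp_mulgV : forall x, mul x (inv x) = e }.

Section QLO.
Variables (G : Type) (mul : G -> G -> G) (e : G) (inv : G -> G) (P : set G).

Definition leP (x y : G) : Prop := P (mul (inv x) y).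

Record quasi_lattice_ordered : Prop := {
  qlo_group : is_group mul e inv;
  qlo_semigroup : forall x y, P x -> P y -> P (mul x y);
  qlo_cap : forall x, (P x /\ P (inv x)) <-> x = e;
  qlo_lub : forall x y, P x -> P y ->
     (exists z, P z /\ leP x z /\ leP y z) ->
     exists z, [/\ P z, leP x z, leP y z &
                 forall w, P w -> leP x w -> leP y w -> leP z w] }.

Definition has_FESSPE : Prop :=
  exists F : seq G,
    (forall f, List.In f F -> P f /\ f <> e) /\
    (forall x, (P x /\ x <> e) <->
               exists f p, [/\ List.In f F, P p & x = mul f p]).

Definition Ptype : Type := {x : G | P x}.

Definition bounded (f : Ptype -> CC) : Prop :=
  exists M : Rdefinitions.R, forall t, `|f t| <= M%:C.

Definition chi (s : G) : Ptype -> CC :=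
  fun t => if pselect (leP s (proj1_sig t)) then 1 else 0.

Definition fadd (f g : Ptype -> CC) : Ptype -> CC := fun t => f t + g t.
Definition fscale (c : CC) (f : Ptype -> CC) : Ptype -> CC := fun t => c * f t.
Definition fmul (f g : Ptype -> CC) : Ptype -> CC := fun t => f t * g t.
Definition fzero : Ptype -> CC := fun _ => 0.

Definition supnorm_le (f g : Ptype -> CC) (eps : Rdefinitions.R) : Prop :=
  forall t, `|f t - g t| <= eps%:C.

Definition c0_P : set (Ptype -> CC) :=
  [set f | forall eps : Rdefinitions.R, 0 < eps ->
     exists K : seq Ptype, forall t, ~ List.In t K -> `|f t| <= eps%:C].

End QLO.

(** ** Generic linear span and norm closure in a complex algebra A,
    where [dle x y eps] means ||x - y|| <= eps. *)
Section Generic.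
Variables (A : Type) (add : A -> A -> A) (scale : CC -> A -> A)
          (amul : A -> A -> A) (zero : A)
          (dle : A -> A -> Rdefinitions.R -> Prop).

Definition span (S : set A) : set A :=
  [set x | exists n (c : 'I_n -> CC) (g : 'I_n -> A),
     (forall i, S (g i)) /\
     x = \big[add/zero]_(i < n) scale (c i) (g i)].

Definition nclosure (S : set A) : set A :=
  [set x | forall eps : Rdefinitions.R, 0 < eps -> exists2 y, S y & dle x y eps].

Definition closed_ideal (B I : set A) : Prop :=
  [/\ I `<=` B,
      I zero /\
      (forall x y, I x -> I y -> I (add x y)),
      (forall c x, I x -> I (scale c x)),
      (forall a x, B a -> I x -> I (amul a x) /\ I (amul x a)) &
      (forall x, B x -> nclosure I x -> I x)].

Definition essential_ideal (B I : set A) : Prop :=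
  closed_ideal B I /\
  forall J, closed_ideal B J -> (exists x, J x /\ x <> zero) ->
    exists x, [/\ I x, J x & x <> zero].

End Generic.

Section Operators.
Variables (G : Type) (mul : G -> G -> G) (e : G) (inv : G -> G) (P : set G).

Local Notation Pt := (Ptype P).

Definition sqnorm_on n (k : 'I_n -> Pt) (xi : Pt -> CC) : CC :=
  \sum_(i < n) `|xi (k i)| ^+ 2.

Definition is_l2 (xi : Pt -> CC) : Prop :=
  exists N : Rdefinitions.R, forall n (k : 'I_n -> Pt), injective k ->
     sqnorm_on k xi <= N%:C.

Definition l2 : Type := {xi : Pt -> CC | is_l2 xi}.

Definition Op : Type := l2 -> (Pt -> CC).

(** ||eta||_2 <= c ||xi||_2 *)
Definition l2_le (eta xi : Pt -> CC) (c : Rdefinitions.R) : Prop :=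
  forall N : Rdefinitions.R,
    (forall n (k : 'I_n -> Pt), injective k -> sqnorm_on k xi <= N%:C) ->
    forall n (k : 'I_n -> Pt), injective k ->
      sqnorm_on k eta <= (c ^+ 2 * N)%:C.

Definition opadd (S T : Op) : Op := fun xi t => S xi t + T xi t.
Definition opscale (c : CC) (S : Op) : Op := fun xi t => c * S xi t.
Definition opzero : Op := fun _ _ => 0.
Definition opcomp (S T : Op) : Op := fun xi =>
  match pselect (is_l2 (T xi)) with
  | left h => S (exist _ (T xi) h)
  | right _ => fun _ => 0
  end.
Definition op_le (S T : Op) (eps : Rdefinitions.R) : Prop :=
  forall xi : l2, l2_le (fun t => S xi t - T xi t) (proj1_sig xi) eps.

Definition extG (xi : Pt -> CC) (g : G) : CC :=
  match pselect (P g) with left h => xi (exist _ g h) | right _ => 0 end.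

(** T_s eps_t = eps_{st}, i.e. (T_s xi)(u) = xi(s^{-1}u) (0 if s^{-1}u \notin P) *)
Definition Tiso (s : G) : Op := fun xi u => extG (proj1_sig xi) (mul (inv s) (proj1_sig u)).
(** its adjoint: (T_s^* xi)(t) = xi(st) *)
Definition Tadj (s : G) : Op := fun xi t => extG (proj1_sig xi) (mul s (proj1_sig t)).

Definition Ddiag : set Op :=
  nclosure op_le (span opadd opscale opzero
                   [set X | exists2 s, P s & X = opcomp (Tiso s) (Tadj s)]).

Definition Mop (f : Pt -> CC) : Op := fun xi t => f t * proj1_sig xi t.

Definition c0_iotaP : set Op := [set X | exists2 f, c0_P f & X = Mop f].

End Operators.

Definition B_P (G : Type) (mul : G -> G -> G) (inv : G -> G) (P : set G)
  : set (Ptype P -> CC) :=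
  nclosure (@supnorm_le G P)
    (span (@fadd G P) (@fscale G P) (@fzero G P)
          [set f | exists2 s, P s & f = chi mul inv s]).

From Pilot Require Import Defs.
From mathcomp Require Import all_boot all_order all_algebra complex.
From mathcomp Require Import boolp classical_sets reals Rstruct.
From mathcomp Require Import ring lra.

(* If F is a FESSPE, then for t in P the product 1_t * prod_(f in F) (1 - 1_(tf))
   is the point mass at t, so B_P contains every finitely supported function and
   hence c_0(P).  Conversely, an element of span{1_s} within 1/3 of the point mass
   at e only sees which of finitely many s lie below its argument, and the s <> e
   among them form a FESSPE.  Multiplying by point masses shows that c_0(P) meets
   every nonzero ideal of B_P.  Finally f |-> M_f is an isometric algebra
   isomorphism of B_P onto D carrying c_0(P) onto c_0(iota(P)), along which the
   statement about D is transported from the one about B_P. *)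

Set Implicit Arguments.
Unset Strict Implicit.
Unset Printing Implicit Defensive.

Import Order.TTheory GRing.Theory Num.Theory.
Local Open Scope ring_scope.
Local Open Scope complex_scope.
Local Open Scope classical_set_scope.

Local Notation R := Rdefinitions.R.

Definition absC (z : CC) : R := complex.Re `|z|.

Lemma absCE (z : CC) : (absC z)%:C = `|z|.
Proof. by rewrite /absC RRe_real // normr_real. Qed.

Lemma absC_ge0 (z : CC) : 0 <= absC z.
Proof. by rewrite -ler0c absCE normr_ge0. Qed.

Lemma normC_le_sqrt (z : CC) (a : R) : `|z| ^+ 2 <= a%:C -> `|z| <= (Num.sqrt a)%:C.
Proof.
rewrite -absCE -rmorphXn !lecR => h.
by rewrite -(ger0_norm (absC_ge0 z)) -sqrtr_sqr ler_wsqrtr.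
Qed.

Lemma normC_small_eq0 (z : CC) (c : R) :
  (forall eps : R, 0 < eps -> `|z| <= (eps * c)%:C) -> z = 0.
Proof.
move=> small; have absC_le0 : absC z <= 0.
  apply/ler_addgt0Pr => r r0; rewrite add0r.
  have [c0|c0] := lerP c 0.
    have := small 1 ltr01; rewrite -absCE lecR mul1r => /le_trans; apply.
    exact: le_trans c0 (ltW r0).
  by have := small (r / c) (divr_gt0 r0 c0); rewrite -absCE lecR divfK ?gt_eqF.
apply: normr0_eq0; rewrite -absCE.
by have -> : absC z = 0 by apply/le_anti; rewrite absC_le0 absC_ge0.
Qed.

Lemma sval_inj (T : Type) (Q : T -> Prop) : injective (@proj1_sig T Q).
Proof. by case=> x hx [y hy] /= exy; exact: eq_exist. Qed.

Lemma In_nth (A : Type) (x0 : A) (L : seq A) i :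
  (i < size L)%N -> List.In (nth x0 L i) L.
Proof. by elim: L i => [|a L IH] [|i] //= h; [left|right; apply: IH]. Qed.

Lemma prod_In_eq1 (K : pzSemiRingType) (I : Type) (r : seq I) (F : I -> K) :
  (forall i, List.In i r -> F i = 1) -> \prod_(i <- r) F i = 1.
Proof.
elim: r => [|a r IH] h; first by rewrite big_nil.
by rewrite big_cons h ?IH ?mul1r //; [move=> i hi; apply: h; right|left].
Qed.

Lemma prod_In_eq0 (K : pzSemiRingType) (I : Type) (r : seq I) (F : I -> K) i0 :
  List.In i0 r -> F i0 = 0 -> \prod_(i <- r) F i = 0.
Proof.
elim: r => [|a r IH] //= [->|hi] h; rewrite big_cons; first by rewrite h mul0r.
by rewrite IH ?mulr0.
Qed.

Section LinearCombinations.
Variable T : Type.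
Implicit Types (S : set (T -> CC)) (f g : T -> CC).

Definition delta (t0 : T) : T -> CC := fun t => if pselect (t = t0) then 1 else 0.

Lemma delta_id t0 : delta t0 t0 = 1.
Proof. by rewrite /delta; case: pselect. Qed.

Lemma delta_neq t0 t : t <> t0 -> delta t0 t = 0.
Proof. by rewrite /delta; case: pselect. Qed.

(* A list-indexed presentation of [Defs.span] (see [span_lincomb]), more convenient
   for induction. *)
Definition lincomb S f : Prop :=
  exists L : seq (CC * (T -> CC)),
    (forall p, List.In p L -> S p.2) /\ forall t, f t = \sum_(p <- L) p.1 * p.2 t.

Lemma lincomb_ext S f g : lincomb S f -> f =1 g -> lincomb S g.
Proof. by case=> L [hL hf] h; exists L; split => // t; rewrite -h hf. Qed.

Lemma lincomb0 S : lincomb S (fun _ => 0).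
Proof. by exists [::]; split => // t; rewrite big_nil. Qed.

Lemma lincomb_gen S f : S f -> lincomb S f.
Proof.
move=> Sf; exists [:: (1, f)]; split; first by move=> p [<-|[]].
by move=> t; rewrite big_seq1 mul1r.
Qed.

Lemma lincombD S f g : lincomb S f -> lincomb S g -> lincomb S (fun t => f t + g t).
Proof.
case=> L1 [h1 e1] [L2 [h2 e2]]; exists (L1 ++ L2); split.
- by move=> p hp; case: (List.in_app_or _ _ _ hp) => [/h1|/h2].
- by move=> t; rewrite big_cat e1 e2.
Qed.

Lemma lincombZ S c f : lincomb S f -> lincomb S (fun t => c * f t).
Proof.
case=> L [hL ef]; exists [seq (c * p.1, p.2) | p <- L]; split.
- by move=> p /List.in_map_iff [q [<- /hL]].
- by move=> t; rewrite big_map ef mulr_sumr; apply: eq_bigr => p _; rewrite mulrA.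
Qed.

Lemma lincomb_sum S (I : Type) (r : seq I) (F : I -> T -> CC) :
  (forall i, List.In i r -> lincomb S (F i)) -> lincomb S (fun t => \sum_(i <- r) F i t).
Proof.
elim: r => [|i r IH] hF.
  by apply: lincomb_ext (lincomb0 S) _ => t; rewrite big_nil.
have := IH (fun j hj => hF j (or_intror hj)).
move/(lincombD (hF i (or_introl erefl)))/lincomb_ext; apply => t.
by rewrite big_cons.
Qed.

Lemma lincombM S f g : (forall u v, S u -> S v -> lincomb S (fun t => u t * v t)) ->
  lincomb S f -> lincomb S g -> lincomb S (fun t => f t * g t).
Proof.
move=> SM [L1 [h1 e1]] [L2 [h2 e2]].
pose h t := \sum_(p <- L1) \sum_(q <- L2) p.1 * q.1 * (p.2 t * q.2 t).
apply: (@lincomb_ext _ h).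
  apply: lincomb_sum => p hp; apply: lincomb_sum => q hq.
  exact: lincombZ (SM _ _ (h1 _ hp) (h2 _ hq)).
move=> t; rewrite e1 e2 big_distrl; apply: eq_bigr => p _; rewrite big_distrr.
by apply: eq_bigr => q _ /=; rewrite mulrACA.
Qed.

Lemma lincomb_prod S (I : Type) (r : seq I) (F : I -> T -> CC) :
  (forall u v, S u -> S v -> lincomb S (fun t => u t * v t)) -> lincomb S (fun _ => 1) ->
  (forall i, List.In i r -> lincomb S (F i)) -> lincomb S (fun t => \prod_(i <- r) F i t).
Proof.
move=> SM S1; elim: r => [|i r IH] hF.
  by apply: lincomb_ext S1 _ => t; rewrite big_nil.
have := IH (fun j hj => hF j (or_intror hj)).
move/(lincombM SM (hF i (or_introl erefl)))/lincomb_ext; apply => t.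
by rewrite big_cons.
Qed.

Lemma lincomb_restrict S f (K : seq T) : (forall t0, lincomb S (delta t0)) ->
  lincomb S (fun t => if pselect (List.In t K) then f t else 0).
Proof.
move=> Sdelta; elim: K => [|a K IH].
  by apply: lincomb_ext (lincomb0 S) _ => t; case: pselect.
have [aK|aK] := pselect (List.In a K).
  apply: lincomb_ext IH _ => t.
  case: pselect => [tK|tK]; case: pselect => [taK|taK] //.
  - by case: taK; right.
  - by case: taK => [ea|//]; case: tK; rewrite -ea.
apply: lincomb_ext (lincombD IH (lincombZ (f a) (Sdelta a))) _ => t.
have [->|ta] := pselect (t = a).
  rewrite delta_id mulr1; case: pselect => [aK'|aK'] /=; first by case: aK.
  by case: pselect => [aaK|aaK] /=; [rewrite add0r|case: aaK; left].
rewrite delta_neq // mulr0 addr0.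
case: pselect => [tK|tK]; case: pselect => [taK|taK] //.
- by case: taK; right.
- by case: taK => [ea|//]; case: ta.
Qed.

Lemma span_lincomb S f :
  Defs.span (fun f g t => f t + g t) (fun c f t => c * f t) (fun _ => 0) S f <->
  lincomb S f.
Proof.
have big_pointwise (I : Type) (r : seq I) (F : I -> T -> CC) t :
    (\big[(fun f g t => f t + g t)/(fun _ => 0)]_(i <- r) F i) t = \sum_(i <- r) F i t.
  by elim: r => [|a r IH]; rewrite ?big_nil ?big_cons //= IH.
split.
- case=> n [c [g [Sg ->]]].
  exists [seq (c i, g i) | i <- index_enum 'I_n]; split.
    by move=> p /List.in_map_iff [i [<- _]]; exact: Sg.
  by move=> t; rewrite big_pointwise big_map.
- case=> L [SL ef].
  exists (size L), (fun i => (tnth (in_tuple L) i).1), (fun i => (tnth (in_tuple L) i).2).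
  split.
    by move=> i; apply: SL; rewrite (tnth_nth (0, fun _ => 0)); exact: In_nth.
  by apply: funext => t; rewrite big_pointwise ef (big_tnth _ _ L).
Qed.

End LinearCombinations.

Section ImageUnderEmbedding.
Variables (A A' : Type).
Variables (add : A -> A -> A) (scale : CC -> A -> A) (amul : A -> A -> A) (zero : A)
  (dle : A -> A -> R -> Prop).
Variables (add' : A' -> A' -> A') (scale' : CC -> A' -> A') (amul' : A' -> A' -> A')
  (zero' : A') (dle' : A' -> A' -> R -> Prop).
Variables (phi : A -> A') (B : set A).
Hypotheses (phi_inj : injective phi) (phi0 : phi zero = zero')
  (phiD : forall x y, phi (add x y) = add' (phi x) (phi y))
  (phiZ : forall c x, phi (scale c x) = scale' c (phi x))
  (phiM : forall x y, B x -> B y -> phi (amul x y) = amul' (phi x) (phi y))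
  (phi_dle : forall x y eps, 0 < eps -> dle' (phi x) (phi y) eps <-> dle x y eps).

Lemma span_image S x :
  Defs.span add scale zero S x -> Defs.span add' scale' zero' (phi @` S) (phi x).
Proof.
case=> n [c [g [Sg ->]]]; exists n, c, (phi \o g); split; first by move=> i; exists (g i).
by rewrite (big_morph phi phiD phi0); apply: eq_bigr => i _; exact: phiZ.
Qed.

Lemma span_image_inv S y : Defs.span add' scale' zero' (phi @` S) y ->
  exists2 x, Defs.span add scale zero S x & phi x = y.
Proof.
case=> n [c [g' [Sg' ->]]].
have /choice [g hg] : forall i, exists x, S x /\ phi x = g' i.
  by move=> i; have [x Sx <-] := Sg' i; exists x.
exists (\big[add/zero]_(i < n) scale (c i) (g i)).
  by exists n, c, g; split => // i; exact: (hg i).1.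
by rewrite (big_morph phi phiD phi0); apply: eq_bigr => i _; rewrite phiZ (hg i).2.
Qed.

Lemma closed_ideal_image I : closed_ideal add scale amul zero dle B I ->
  closed_ideal add' scale' amul' zero' dle' (phi @` B) (phi @` I).
Proof.
case=> IB [I0 ID] IZ IM Icl; split.
- by move=> _ [x Ix <-]; exists x => //; exact: IB.
- split; first by exists zero.
  by move=> _ _ [x Ix <-] [y Iy <-]; exists (add x y); rewrite ?phiD //; exact: ID.
- by move=> c _ [x Ix <-]; exists (scale c x); rewrite ?phiZ //; exact: IZ.
- move=> _ _ [a Ba <-] [x Ix <-]; have [Iax Ixa] := IM a x Ba Ix.
  by split; [exists (amul a x) | exists (amul x a)]; rewrite // phiM //; exact: IB.
- move=> _ [x Bx <-] clx; exists x => //; apply: Icl => // eps eps0.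
  have [_ [y Iy <-] xy] := clx eps eps0.
  by exists y => //; apply/phi_dle.
Qed.

Lemma closed_ideal_preimage J :
  closed_ideal add' scale' amul' zero' dle' (phi @` B) J ->
  closed_ideal add scale amul zero dle B [set x | B x /\ J (phi x)].
Proof.
case=> JB [J0 JD] JZ JM Jcl.
have BJ x : J (phi x) -> B x by move=> /JB [y By /phi_inj <-].
have JBphi x : J (phi x) -> B x /\ J (phi x) by move=> Jx; split => //; exact: BJ.
split.
- by move=> x [].
- split; first by apply: JBphi; rewrite phi0.
  by move=> x y [_ Jx] [_ Jy]; apply: JBphi; rewrite phiD; exact: JD.
- by move=> c x [_ Jx]; apply: JBphi; rewrite phiZ; exact: JZ.
- move=> a x Ba [Bx Jx]; have [Jax Jxa] := JM _ _ (imageP phi Ba) Jx.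
  by split; apply: JBphi; rewrite phiM.
- move=> x Bx clx; split => //; apply: Jcl; first exact: imageP.
  move=> eps eps0; have [y [By Jy] xy] := clx eps eps0.
  by exists (phi y) => //; apply/phi_dle.
Qed.

Lemma essential_ideal_image I : essential_ideal add scale amul zero dle B I ->
  essential_ideal add' scale' amul' zero' dle' (phi @` B) (phi @` I).
Proof.
case=> idI essI; split; first exact: closed_ideal_image.
move=> J idJ [y [Jy y0]]; have [JB _ _ _ _] := idJ.
have [x Bx xy] := JB _ Jy; subst y.
have x0 : x <> zero by move=> x0; apply: y0; rewrite x0.
have [z [Iz [_ Jz] z0]] :=
  essI _ (closed_ideal_preimage idJ) (ex_intro _ x (conj (conj Bx Jy) x0)).
by exists (phi z); split; [exact: imageP | exact: Jz | rewrite -phi0 => /phi_inj].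
Qed.

End ImageUnderEmbedding.

Section FunctionsOnP.
Variables (G : Type) (P : set G).
Local Notation Pt := (Ptype P).
Local Notation bounded := (@bounded G P).
Local Notation c0 := (@c0_P G P).
Implicit Types (f g : Pt -> CC).

Lemma bounded_const c : bounded (fun _ => c).
Proof. by exists (absC c) => t; rewrite absCE. Qed.

Lemma boundedD f g : bounded f -> bounded g -> bounded (fun t => f t + g t).
Proof.
move=> [M hM] [N hN]; exists (M + N) => t; rewrite rmorphD.
exact: le_trans (ler_normD _ _) (lerD (hM t) (hN t)).
Qed.

Lemma boundedM f g : bounded f -> bounded g -> bounded (fun t => f t * g t).
Proof.
move=> [M hM] [N hN]; exists (M * N) => t; rewrite normrM rmorphM.
by apply: ler_pM; rewrite ?normr_ge0.
Qed.

Lemma lincomb_bounded S g : (forall f, S f -> bounded f) -> lincomb S g -> bounded g.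
Proof.
move=> Sb [L [SL /funext ->]]; elim: L SL => [|p L IH] SL.
  by exists 0 => t; rewrite big_nil normr0.
have -> : (fun t => \sum_(q <- p :: L) q.1 * q.2 t) =
    (fun t => p.1 * p.2 t + \sum_(q <- L) q.1 * q.2 t).
  by apply: funext => t; rewrite big_cons.
apply: boundedD; first exact: boundedM (bounded_const _) (Sb _ (SL p (or_introl erefl))).
exact: IH (fun q hq => SL q (or_intror hq)).
Qed.

Lemma bounded_approx f g : supnorm_le f g 1 -> bounded g -> bounded f.
Proof.
move=> fg [M hM]; exists (1 + M) => t; rewrite -(subrK (g t) (f t)) rmorphD.
exact: le_trans (ler_normD _ _) (lerD (fg t) (hM t)).
Qed.

Lemma c0_delta t0 : c0 (delta t0).
Proof.
move=> eps eps0; exists [:: t0] => t tt0.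
have tt0' : t <> t0 by move=> ett0; apply: tt0; left.
by rewrite delta_neq // normr0 ler0c ltW.
Qed.

Lemma c0D f g : c0 f -> c0 g -> c0 (fun t => f t + g t).
Proof.
move=> c0f c0g eps eps0; have eps20 : 0 < eps / 2 by rewrite divr_gt0.
have [K1 h1] := c0f _ eps20; have [K2 h2] := c0g _ eps20.
exists (K1 ++ K2) => t tK.
have nK1 : ~ List.In t K1 by move=> h; apply: tK; apply: List.in_or_app; left.
have nK2 : ~ List.In t K2 by move=> h; apply: tK; apply: List.in_or_app; right.
rewrite (splitr eps) rmorphD.
exact: le_trans (ler_normD _ _) (lerD (h1 t nK1) (h2 t nK2)).
Qed.

Lemma bounded_c0M f g : bounded f -> c0 g -> c0 (fun t => f t * g t).
Proof.
case=> M hM c0g eps eps0; pose M' : R := `|M| + 1.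
have M'0 : 0 < M' by rewrite ltr_pwDr ?normr_ge0.
have [K hK] := c0g (eps / M') (divr_gt0 eps0 M'0).
exists K => t tK; rewrite normrM -[eps](divfK (lt0r_neq0 M'0)) mulrC rmorphM.
apply: ler_pM; rewrite ?normr_ge0 ?hK //.
by apply: le_trans (hM t) _; rewrite lecR /M' ler_wpDr // ler_norm.
Qed.

Lemma c0_closed f : nclosure (@supnorm_le G P) c0 f -> c0 f.
Proof.
move=> clf eps eps0; have eps20 : 0 < eps / 2 by rewrite divr_gt0.
have [g c0g fg] := clf _ eps20; have [K hK] := c0g _ eps20.
exists K => t tK; rewrite -(subrK (g t) (f t)) (splitr eps) rmorphD.
exact: le_trans (ler_normD _ _) (lerD (fg t) (hK t tK)).
Qed.

End FunctionsOnP.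

Section MultiplicationOperators.
Variables (G : Type) (P : set G).
Local Notation Pt := (Ptype P).
Local Notation Mop := (@Mop G P).
Implicit Types (f g : Pt -> CC) (X : Op P).

Definition sqnorm_le (xi : Pt -> CC) (N : R) : Prop :=
  forall n (k : 'I_n -> Pt), injective k -> sqnorm_on k xi <= N%:C.

Lemma sqnorm_le_pt xi N u : sqnorm_le xi N -> `|xi u| <= (Num.sqrt N)%:C.
Proof.
move=> hN; apply: normC_le_sqrt.
have := hN 1%N (fun _ => u) (fun i j _ => etrans (ord1 i) (esym (ord1 j))).
by rewrite /sqnorm_on big_ord1.
Qed.

Lemma sqnorm_le_delta t0 : sqnorm_le (delta t0) 1.
Proof.
move=> n k k_inj; rewrite /sqnorm_on.
have [[i0 ki0]|nk] := pselect (exists i, k i = t0).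
  rewrite (bigD1 i0) //= ki0 delta_id normr1 expr1n big1 ?addr0 // => i ii0.
  rewrite delta_neq ?normr0 ?expr0n // => kit0.
  by move/eqP: ii0; apply; apply: k_inj; rewrite kit0 ki0.
rewrite big1 ?ler0c // => i _; rewrite delta_neq ?normr0 ?expr0n //.
by move=> kit0; apply: nk; exists i.
Qed.

Definition delta_l2 (t0 : Pt) : l2 P :=
  exist _ (delta t0) (ex_intro _ 1 (sqnorm_le_delta t0)).

Lemma sqnorm_leM f xi M N : (forall t, `|f t| <= M%:C) -> sqnorm_le xi N ->
  sqnorm_le (fun t => f t * xi t) (M ^+ 2 * N).
Proof.
move=> hM hN n k k_inj; rewrite -(real_normK (num_real M)) rmorphM rmorphXn.
apply: le_trans (ler_wpM2l _ (hN n k k_inj)); last by rewrite exprn_ge0 // ler0c.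
rewrite /sqnorm_on mulr_sumr; apply: ler_sum => i _.
rewrite normrM exprMn ler_wpM2r ?exprn_ge0 ?normr_ge0 // !expr2.
have fM : `|f (k i)| <= `|M|%:C by rewrite (le_trans (hM _)) // lecR ler_norm.
by apply: ler_pM; rewrite ?normr_ge0.
Qed.

Lemma Mop_l2 f (xi : l2 P) : bounded f -> is_l2 (Mop f xi).
Proof.
by case=> M hM; have [N hN] := proj2_sig xi; exists (M ^+ 2 * N); exact: sqnorm_leM.
Qed.

Lemma Mop0 : Mop (@fzero G P) = @opzero G P.
Proof. by apply: funext => xi; apply: funext => t; rewrite /Mop /fzero mul0r. Qed.

Lemma MopD f g : Mop (fadd f g) = opadd (Mop f) (Mop g).
Proof. by apply: funext => xi; apply: funext => t; rewrite /Mop /fadd mulrDl. Qed.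

Lemma MopZ c f : Mop (fscale c f) = opscale c (Mop f).
Proof. by apply: funext => xi; apply: funext => t; rewrite /Mop /fscale -mulrA. Qed.

Lemma MopM f g : bounded g -> Mop (fmul f g) = opcomp (Mop f) (Mop g).
Proof.
move=> bg; apply: funext => xi; apply: funext => t; rewrite /opcomp.
by case: pselect => [l2g|/(_ (Mop_l2 xi bg))//]; rewrite /Mop /fmul /= mulrA.
Qed.

Definition diag X (t : Pt) : CC := X (delta_l2 t) t.

Lemma diag_Mop f : diag (Mop f) = f.
Proof. by apply: funext => t; rewrite /diag /Mop /= delta_id mulr1. Qed.

Lemma Mop_inj : injective Mop.
Proof. by move=> f g /(congr1 diag); rewrite !diag_Mop. Qed.

Lemma op_le_pt X Y eps (xi : l2 P) N u : 0 <= eps -> op_le X Y eps ->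
  sqnorm_le (sval xi) N -> `|X xi u - Y xi u| <= (eps * Num.sqrt N)%:C.
Proof.
move=> eps0 XY hN.
have -> : eps * Num.sqrt N = Num.sqrt (eps ^+ 2 * N).
  by rewrite sqrtrM ?sqr_ge0 // sqrtr_sqr ger0_norm.
exact: sqnorm_le_pt (XY xi N hN).
Qed.

Lemma op_le_diag X g eps : 0 <= eps -> op_le X (Mop g) eps -> supnorm_le (diag X) g eps.
Proof.
move=> eps0 Xg t.
have := @op_le_pt X (Mop g) eps (delta_l2 t) 1 t eps0 Xg (sqnorm_le_delta t).
by rewrite sqrtr1 mulr1 /Mop /= delta_id mulr1.
Qed.

Lemma op_le_Mop f g eps : supnorm_le f g eps -> op_le (Mop f) (Mop g) eps.
Proof.
move=> fg xi N hN; have := sqnorm_leM fg hN.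
have -> : (fun t => Mop f xi t - Mop g xi t) = (fun t => (f t - g t) * sval xi t) by
  apply: funext => t; rewrite /Mop mulrBl.
by [].
Qed.

Lemma op_le_MopE f g eps : 0 <= eps -> op_le (Mop f) (Mop g) eps <-> supnorm_le f g eps.
Proof.
by move=> eps0; split; [move/(op_le_diag eps0); rewrite diag_Mop | exact: op_le_Mop].
Qed.

Lemma Mop_limit X :
  (forall eps, 0 < eps -> exists g, op_le X (Mop g) eps) -> X = Mop (diag X).
Proof.
move=> approx; apply: funext => xi; apply: funext => u.
have [N hN] := proj2_sig xi.
apply/eqP; rewrite -subr_eq0; apply/eqP.
apply: (@normC_small_eq0 _ (2 * Num.sqrt N)) => eps eps0.
have [g Xg] := approx eps eps0; have dg := op_le_diag (ltW eps0) Xg.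
have -> : X xi u - Mop (diag X) xi u =
    (X xi u - Mop g xi u) + (g u - diag X u) * sval xi u.
  by rewrite /Mop mulrBl addrA subrK.
have -> : eps * (2 * Num.sqrt N) = eps * Num.sqrt N + eps * Num.sqrt N by ring.
rewrite rmorphD; apply: le_trans (ler_normD _ _) (lerD _ _).
  exact: op_le_pt (ltW eps0) Xg hN.
rewrite normrM rmorphM distrC; apply: ler_pM; rewrite ?normr_ge0 ?dg //.
exact: sqnorm_le_pt.
Qed.

Lemma c0_iotaP_image : @c0_iotaP G P = Mop @` @c0_P G P.
Proof. by apply/seteqP; split => X [f c0f fX]; exists f. Qed.

Lemma extG_in (xi : Pt -> CC) x (Px : P x) : extG xi x = xi (exist _ x Px).
Proof. by rewrite /extG; case: pselect => [Px'|//]; congr xi; exact: sval_inj. Qed.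

Lemma extG_out (xi : Pt -> CC) x : ~ P x -> extG xi x = 0.
Proof. by rewrite /extG; case: pselect. Qed.

End MultiplicationOperators.

Section GroupFacts.
Variables (G : Type) (mul : G -> G -> G) (e : G) (inv : G -> G).
Hypothesis hG : is_group mul e inv.

Lemma grp_mulKg x y : mul (inv x) (mul x y) = y.
Proof. by rewrite (grp_mulA hG) (grp_mulVg hG) (grp_mul1g hG). Qed.

Lemma grp_mulKVg x y : mul x (mul (inv x) y) = y.
Proof. by rewrite (grp_mulA hG) (grp_mulgV hG) (grp_mul1g hG). Qed.

Lemma grp_mulgI x : injective (mul x).
Proof. by move=> y z yz; rewrite -(grp_mulKg x y) yz grp_mulKg. Qed.

Lemma grp_invg1 : inv e = e.
Proof. by rewrite -[inv e](grp_mulg1 hG) (grp_mulVg hG). Qed.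

Lemma grp_invMg x y : inv (mul x y) = mul (inv y) (inv x).
Proof.
apply: (@grp_mulgI (mul x y)); rewrite (grp_mulgV hG) -(grp_mulA hG).
by rewrite (grp_mulA hG y) (grp_mulgV hG) (grp_mul1g hG) (grp_mulgV hG).
Qed.

End GroupFacts.

Section QuasiLatticeOrder.
Variables (G : Type) (mul : G -> G -> G) (e : G) (inv : G -> G) (P : set G).
Hypothesis hQ : quasi_lattice_ordered mul e inv P.
Local Notation hG := (qlo_group hQ).
Local Notation le := (@Defs.leP G mul inv P).
Local Notation Pt := (Ptype P).
Local Notation chi := (@chi G mul inv P).
Local Notation B_P := (@B_P G mul inv P).
Local Notation c0 := (@c0_P G P).
Local Notation Mop := (@Mop G P).

Lemma P_e : P e.
Proof. by case: (qlo_cap hQ e) => _ /(_ erefl) []. Qed.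

Lemma P_mul x y : P x -> P y -> P (mul x y).
Proof. exact: (qlo_semigroup hQ). Qed.

Definition e_pt : Pt := exist _ e P_e.

Lemma leP_refl x : le x x.
Proof. by rewrite /Defs.leP (grp_mulVg hG); exact: P_e. Qed.

Lemma leP_trans x y z : le x y -> le y z -> le x z.
Proof. by rewrite /Defs.leP => xy /(P_mul xy); rewrite -(grp_mulA hG) (grp_mulKVg hG). Qed.

Lemma leP_mul2l a x y : le (mul a x) (mul a y) <-> le x y.
Proof. by rewrite /Defs.leP (grp_invMg hG) -(grp_mulA hG) (grp_mulKg hG). Qed.

Lemma leP1_eq s : P s -> le s e -> s = e.
Proof. by rewrite /Defs.leP (grp_mulg1 hG) => Ps Psi; apply/(qlo_cap hQ). Qed.

Lemma mul_neq1 f p : P f -> P p -> f <> e -> mul f p <> e.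
Proof.
move=> Pf Pp f1 fp1; apply/f1/(qlo_cap hQ); split => //.
by rewrite -[inv f](grp_mulg1 hG) -fp1 (grp_mulKg hG).
Qed.

Lemma chi_le s t : le s (sval t) -> chi s t = 1.
Proof. by rewrite /chi; case: pselect. Qed.

Lemma chi_nle s t : ~ le s (sval t) -> chi s t = 0.
Proof. by rewrite /chi; case: pselect. Qed.

Lemma chi_e t : chi e t = 1.
Proof.
by apply: chi_le; rewrite /Defs.leP (grp_invg1 hG) (grp_mul1g hG); exact: (proj2_sig t).
Qed.

Lemma chi_norm s t : `|chi s t| <= 1.
Proof. by rewrite /chi; case: pselect => h; rewrite ?normr1 ?normr0. Qed.

Lemma chi_eq s t t' : (le s (sval t) <-> le s (sval t')) -> chi s t = chi s t'.
Proof. by move=> tt'; rewrite /chi (propext tt'). Qed.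

Definition chi_gens : set (Pt -> CC) := [set f | exists2 s, P s & f = chi s].

Lemma chi_gensM u v : chi_gens u -> chi_gens v -> lincomb chi_gens (fun t => u t * v t).
Proof.
case=> s Ps ->; case=> r Pr ->.
have [ub|noub] := pselect (exists z, P z /\ le s z /\ le r z).
  have [z [Pz sz rz zlub]] := qlo_lub hQ Ps Pr ub.
  apply: lincomb_ext (lincomb_gen (_ : chi_gens (chi z))) _; first by exists z.
  move=> t; have Pt_t := proj2_sig t.
  have [st|st] := pselect (le s (sval t)); last first.
    by rewrite (chi_nle st) mul0r chi_nle // => /(leP_trans sz).
  have [rt|rt] := pselect (le r (sval t)); last first.
    by rewrite (chi_nle rt) mulr0 chi_nle // => /(leP_trans rz).
  by rewrite !chi_le ?mulr1 //; exact: zlub.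
apply: lincomb_ext (lincomb0 _) _ => t.
have [st|st] := pselect (le s (sval t)); last by rewrite (chi_nle st) mul0r.
have [rt|rt] := pselect (le r (sval t)); last by rewrite (chi_nle rt) mulr0.
by case: noub; exists (sval t); split => //; exact: (proj2_sig t).
Qed.

Lemma delta_prod_chi (F : seq G) (t0 t : Pt) :
  (forall f, List.In f F -> P f /\ f <> e) ->
  (forall x, P x /\ x <> e -> exists f p, [/\ List.In f F, P p & x = mul f p]) ->
  delta t0 t = chi (sval t0) t * \prod_(f <- F) (1 - chi (mul (sval t0) f) t).
Proof.
move=> hF hFP; set s := sval t0.
have [st|st] := pselect (le s (sval t)); last first.
  by rewrite chi_nle // mul0r delta_neq // => tt0; apply: st; rewrite tt0; exact: leP_refl.
rewrite chi_le // mul1r.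
have [->|tt0] := pselect (t = t0).
  rewrite delta_id prod_In_eq1 // => f /hF [Pf f1]; rewrite chi_nle ?subr0 //.
  by rewrite -[X in le _ X](grp_mulg1 hG) => /leP_mul2l /(leP1_eq Pf).
rewrite delta_neq //.
have y1 : mul (inv s) (sval t) <> e.
  by move=> y1; apply/tt0/sval_inj; rewrite -[sval t](grp_mulKVg hG s) y1 (grp_mulg1 hG).
have [f [p [Ff Pp yfp]]] := hFP _ (conj st y1).
apply/esym/(prod_In_eq0 Ff); rewrite chi_le ?subrr //.
by rewrite /Defs.leP -[sval t](grp_mulKVg hG s) yfp (grp_mulA hG s) (grp_mulKg hG).
Qed.

Lemma lincomb_delta : has_FESSPE mul e P -> forall t0, lincomb chi_gens (delta t0).
Proof.
case=> F [hF hFP] t0.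
have gen1 : lincomb chi_gens (fun _ => 1).
  by apply: lincomb_gen; exists e; [exact: P_e | apply: funext => t; rewrite chi_e].
have factor f : P f -> lincomb chi_gens (fun t => 1 - chi (mul (sval t0) f) t).
  move=> Pf; have sf : chi_gens (chi (mul (sval t0) f)).
    by exists (mul (sval t0) f) => //; exact: P_mul (proj2_sig t0) Pf.
  apply: lincomb_ext (lincombD gen1 (lincombZ (-1) (lincomb_gen sf))) _ => t.
  by rewrite mulN1r.
apply: lincomb_ext (fun t => esym (delta_prod_chi t0 t hF (fun x => (hFP x).1))).
apply: lincombM chi_gensM _ _.
  by apply: lincomb_gen; exists (sval t0) => //; exact: (proj2_sig t0).
by apply: lincomb_prod chi_gensM gen1 _ => f /hF [Pf _]; exact: factor.
Qed.

Lemma B_P_lincomb f : B_P f <->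
  forall eps, 0 < eps -> exists2 g, lincomb chi_gens g & supnorm_le f g eps.
Proof.
by split=> Bf eps /Bf [g Sg fg]; exists g => //; apply/span_lincomb.
Qed.

Lemma B_P_bounded f : B_P f -> bounded f.
Proof.
move=> /B_P_lincomb /(_ 1 ltr01) [g Sg fg]; apply: bounded_approx fg _.
by apply: lincomb_bounded Sg => _ [s _ ->]; exists 1; exact: chi_norm.
Qed.

Lemma c0_sub_B_P : has_FESSPE mul e P -> c0 `<=` B_P.
Proof.
move=> hF f c0f; apply/B_P_lincomb => eps eps0; have [K hK] := c0f eps eps0.
exists (fun t => if pselect (List.In t K) then f t else 0).
  exact: lincomb_restrict (lincomb_delta hF).
move=> t; case: pselect => [tK|tK] /=; last by rewrite subr0; exact: hK.
by rewrite subrr normr0 ler0c ltW.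
Qed.

Lemma lincomb_chi_determined g : lincomb chi_gens g ->
  exists FS : seq G, (forall s, List.In s FS -> P s /\ s <> e) /\
    forall t t' : Pt, (forall s, List.In s FS -> le s (sval t) <-> le s (sval t')) ->
      g t = g t'.
Proof.
case=> L [SL eg]; rewrite (funext eg); elim: L SL {eg} => [|[c f] L IH] SL.
  by exists [::]; split => // t t' _; rewrite !big_nil.
have [FS [hFS hL]] := IH (fun p hp => SL p (or_intror hp)).
have [s Ps /= ->] := SL _ (or_introl erefl).
have [->|s1] := pselect (s = e).
  by exists FS; split => // t t' tt'; rewrite !big_cons /= !chi_e (hL _ _ tt').
exists (s :: FS); split; first by move=> r [<-|/hFS].
move=> t t' tt'; rewrite !big_cons /= (chi_eq (tt' s (or_introl erefl))).
by rewrite (hL t t') // => r hr; apply: tt'; right.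
Qed.

Lemma has_FESSPE_of_delta : B_P (delta e_pt) -> has_FESSPE mul e P.
Proof.
have third : (0 : R) < 3^-1 by rewrite invr_gt0.
move=> /B_P_lincomb /(_ _ third) [g /lincomb_chi_determined [FS [hFS hg]] near].
exists FS; split => // x; split; last first.
  by case=> f [p [/hFS [Pf f1] Pp ->]]; split; [exact: P_mul | exact: mul_neq1].
case=> Px x1; apply: contrapT => noFS.
pose tx : Pt := exist _ x Px.
have gx : g tx = g e_pt.
  apply: hg => s sFS; have [Ps s1] := hFS s sFS; split => hs; exfalso.
  - by apply: noFS; exists s, (mul (inv s) x); split; rewrite ?(grp_mulKVg hG).
  - exact/s1/leP1_eq.
have tx1 : tx <> e_pt by move/(congr1 sval).
have := near tx; rewrite delta_neq // sub0r normrN gx => near_x.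
have := near e_pt; rewrite delta_id => near_e.
have : `|1 : CC| <= (3^-1 + 3^-1)%:C.
  rewrite -(subrK (g e_pt) 1) rmorphD.
  exact: le_trans (ler_normD _ _) (lerD near_e near_x).
rewrite normr1 -(rmorph1 (real_complex R)) lecR; lra.
Qed.

Lemma FESSPE_iff_c0_sub_B_P : has_FESSPE mul e P <-> c0 `<=` B_P.
Proof.
by split; [exact: c0_sub_B_P | move=> c0B; apply/has_FESSPE_of_delta/c0B/c0_delta].
Qed.

Lemma c0_closed_ideal : has_FESSPE mul e P ->
  closed_ideal (@fadd G P) (@fscale G P) (@fmul G P) (@fzero G P) (@supnorm_le G P) B_P c0.
Proof.
move=> hF; split.
- exact: c0_sub_B_P.
- split; last exact: c0D.
  by move=> eps eps0; exists [::] => t _; rewrite /fzero normr0 ler0c ltW.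
- by move=> c f c0f; exact: bounded_c0M (bounded_const _ c) c0f.
- move=> f g Bf c0g; split; first exact: bounded_c0M (B_P_bounded Bf) c0g.
  have -> : fmul g f = fmul f g by apply: funext => t; exact: mulrC.
  exact: bounded_c0M (B_P_bounded Bf) c0g.
- by move=> f _; exact: c0_closed.
Qed.

Lemma c0_essential_ideal : has_FESSPE mul e P ->
  essential_ideal (@fadd G P) (@fscale G P) (@fmul G P) (@fzero G P) (@supnorm_le G P)
    B_P c0.
Proof.
move=> hF; split; first exact: c0_closed_ideal.
move=> J [JB _ _ JM _] [f [Jf f0]].
have [t ft] : exists t, f t <> 0.
  apply: contrapT => f0'; apply/f0/funext => t.
  by apply: contrapT => ft; apply: f0'; exists t.
exists (fmul (delta t) f); split.
- have -> : fmul (delta t) f = fmul f (delta t) by apply: funext => u; exact: mulrC.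
  exact: bounded_c0M (B_P_bounded (JB _ Jf)) (c0_delta t).
- exact: (JM _ _ (c0_sub_B_P hF (c0_delta t)) Jf).1.
- by move/(congr1 (fun h => h t)); rewrite /fmul /fzero delta_id mul1r.
Qed.

Lemma FESSPE_iff_c0_essential_ideal : has_FESSPE mul e P <->
  essential_ideal (@fadd G P) (@fscale G P) (@fmul G P) (@fzero G P) (@supnorm_le G P)
    B_P c0.
Proof.
split; first exact: c0_essential_ideal.
by case=> [[c0B _ _ _ _] _]; apply/FESSPE_iff_c0_sub_B_P.
Qed.

Lemma Tadj_l2 s (xi : l2 P) : P s -> is_l2 (Tadj mul s xi).
Proof.
move=> Ps; have [N hN] := proj2_sig xi; exists N => n k k_inj.
pose k' i : Pt := exist P (mul s (sval (k i))) (P_mul Ps (proj2_sig (k i))).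
have k'_inj : injective k'.
  by move=> i j /(congr1 sval) /(grp_mulgI hG) /sval_inj /k_inj.
suff -> : sqnorm_on k (Tadj mul s xi) = sqnorm_on k' (sval xi) by exact: hN.
by apply: eq_bigr => i _; rewrite /Tadj (extG_in _ (P_mul Ps (proj2_sig (k i)))).
Qed.

Lemma TT_Mop s : P s -> opcomp (Tiso mul inv s) (Tadj mul s) = Mop (chi s).
Proof.
move=> Ps; apply: funext => xi; apply: funext => u; rewrite /opcomp.
case: pselect => [l2T|]; last by move/(_ (Tadj_l2 xi Ps)).
rewrite /Tiso /Mop /=.
have [Pu|nPu] := pselect (P (mul (inv s) (sval u))); last first.
  by rewrite extG_out // chi_nle // mul0r.
rewrite (extG_in _ Pu) chi_le // mul1r /Tadj /= (extG_in _ (P_mul Ps Pu)).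
by congr (sval xi); apply: sval_inj; rewrite /= (grp_mulKVg hG).
Qed.

Lemma Tgens_image :
  [set X | exists2 s, P s & X = opcomp (Tiso mul inv s) (Tadj mul s)] = Mop @` chi_gens.
Proof.
apply/seteqP; split => X.
- by case=> s Ps ->; exists (chi s); [exists s | rewrite TT_Mop].
- by case=> _ [s Ps ->] <-; exists s; rewrite ?TT_Mop.
Qed.

Lemma Ddiag_image : @Ddiag G mul inv P = Mop @` B_P.
Proof.
rewrite /Ddiag Tgens_image; apply/seteqP; split => X.
- move=> DX; have approx eps : 0 < eps ->
      exists2 g, Defs.span (@fadd G P) (@fscale G P) (@fzero G P) chi_gens g &
        op_le X (Mop g) eps.
    move=> /DX [_ /(span_image_inv (Mop0 P) (@MopD G P) (@MopZ G P)) [g Sg <-] Xg].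
    by exists g.
  exists (diag X); last first.
    by apply/esym/Mop_limit => eps /approx [g _ Xg]; exists g.
  apply/B_P_lincomb => eps /[dup] eps0 /approx [g Sg Xg]; exists g.
    exact/span_lincomb.
  exact: op_le_diag (ltW eps0) Xg.
- case=> f /B_P_lincomb Bf <- eps /[dup] eps0 /Bf [g Sg fg].
  exists (Mop g); last exact: op_le_Mop.
  by apply: (span_image (Mop0 P) (@MopD G P) (@MopZ G P)); exact/span_lincomb.
Qed.

End QuasiLatticeOrder.

Theorem lemma6p4 (G : Type) (mul : G -> G -> G) (e : G) (inv : G -> G)
  (P : set G) (hQ : quasi_lattice_ordered mul e inv P) :
  [/\ (has_FESSPE mul e P <-> (@c0_P G P `<=` @B_P G mul inv P)),
      (has_FESSPE mul e P <->
         essential_ideal (@fadd G P) (@fscale G P) (@fmul G P) (@fzero G P)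
           (@supnorm_le G P) (@B_P G mul inv P) (@c0_P G P)) &
      (has_FESSPE mul e P <->
         essential_ideal (@opadd G P) (@opscale G P) (@opcomp G P) (@opzero G P)
           (@op_le G P) (@Ddiag G mul inv P) (@c0_iotaP G P))].
Proof.
have c0B := FESSPE_iff_c0_sub_B_P hQ.
have c0ess := FESSPE_iff_c0_essential_ideal hQ.
split=> //; rewrite (Ddiag_image hQ) c0_iotaP_image; split.
- move/c0ess; apply: essential_ideal_image.
  + exact: Mop_inj.
  + exact: Mop0.
  + exact: MopD.
  + exact: MopZ.
  + by move=> f g _ /B_P_bounded; exact: MopM.
  + by move=> f g eps /ltW; exact: op_le_MopE.
- case=> [[sub _ _ _ _] _]; apply/c0B => f c0f.
  by have [g Bg /Mop_inj <-] := sub _ (imageP _ c0f).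
Qed.
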